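(* Let $A\in\tilde\omega_n^{0,1}$ and suppose $G_A$ contains a directed cycle $C$: $v_{i_1}\to v_{i_2}\to\cdots\to v_{i_r}\to v_{i_1}$ with edge weights $a_{i_1i_2},\dots,a_{i_ri_1}$. Let $\tilde A$ be the $(n-r)\times(n-r)$ principal submatrix of $A$ obtained by deleting rows and columns $i_1,\dots,i_r$ (with $\operatorname{per}$ of the empty matrix equal to $1$). Then $$\operatorname{per}(I-A)=\operatorname{per}(I-\tilde A)\,\big(1+(-1)^r a_{i_1i_2}a_{i_2i_3}\cdots a_{i_ri_1}\big).$$
   Context: An $n\times n$ matrix is row substochastic if all its entries are nonnegative and each row sum is at most $1$. $\tilde\omega_n^{0,1}$ denotes the set of all $n\times n$ row substochastic matrices with zero main diagonal and at most one positive entry in each row. For an $n\times n$ matrix $A=[a_{ij}]$, $G_A$ is the directed weighted graph on vertices $v_1,\dots,v_n$ having a directed edge $v_i\to v_j$ of weight $a_{ij}$ exactly when $a_{ij}\ne 0$. The permanent is $\operatorname{per}(M)=\sum_{\pi\in S_n}\prod_i m_{i\pi(i)}$, and $I$ denotes an identity matrix of the appropriate size. *)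

From HB Require Import structures.
From mathcomp Require Import all_boot all_order.
From mathcomp Require Import fingroup perm.
From mathcomp Require Import all_algebra.
Set Implicit Arguments. Unset Strict Implicit. Unset Printing Implicit Defensive.
Import Order.TTheory GRing.Theory Num.Theory.
Local Open Scope ring_scope.

Definition per (R : comPzRingType) (n : nat) (M : 'M[R]_n) : R :=
  \sum_(s : 'S_n) \prod_(i < n) M i (s i).

Definition row_substochastic (R : realFieldType) (n : nat) (A : 'M[R]_n) : Prop :=
  (forall i j, 0 <= A i j) /\ (forall i, \sum_(j < n) A i j <= 1).

Definition omega01 (R : realFieldType) (n : nat) (A : 'M[R]_n) : Prop :=
  [/\ row_substochastic A,
      (forall i, A i i = 0) &
      (forall i, #|[pred j | (0 < A i j)%R]| <= 1)%N].

Definition GA_edge (R : realFieldType) (n : nat) (A : 'M[R]_n) : rel 'I_n :=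
  fun i j => A i j != 0.

(* principal submatrix of A obtained by deleting the rows and columns
   with indices in s; indexed by the complement set, size #|~: s| = n - size s
   when s is duplicate-free *)
Definition del_principal (R : realFieldType) (n : nat) (A : 'M[R]_n)
    (s : seq 'I_n) : 'M[R]_#|[set x : 'I_n | x \notin s]| :=
  \matrix_(i, j) A (enum_val i) (enum_val j).

From HB Require Import structures.
From mathcomp Require Import all_boot all_order.
From mathcomp Require Import fingroup perm.
From mathcomp Require Import all_algebra.
Import Order.TTheory GRing.Theory Num.Theory.
Set Implicit Arguments. Unset Strict Implicit. Unset Printing Implicit Defensive.
Local Open Scope ring_scope.

(* The rows of [1 - A] indexed by the cycle C carry 1 on the diagonal and
   their only other nonzero entry in the column of the successor on C.  So a
   permutation of nonzero weight either fixes C pointwise or, once it moves a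
   vertex of C, maps every vertex of C to its successor: if s c = next c, the
   column next c is taken and s (next c) must be next (next c).  Permutations
   of the first kind sum to per (1 - Ã); composing them with the rotation of C
   maps them onto those of the second kind and multiplies each weight by
   \prod_c - a_(c, next c) = (-1)^r a_(i1,i2) ... a_(ir,i1). *)

Lemma fpath_all (T : eqType) (f : T -> T) (P : pred T) x q :
  (forall y, P y -> P (f y)) -> fpath f x q -> P x -> all P q.
Proof.
move=> fP; elim: q x => [//|y q IHq] x /= /andP[/eqP <- fxq] Px.
by rewrite fP // (IHq _ fxq (fP _ Px)).
Qed.

Lemma cycle_next_invariant (T : eqType) (C : seq T) (P : pred T) :
    uniq C -> {in C, forall y, P y -> P (next C y)} ->
  forall x, x \in C -> P x -> {in C, forall y, P y}.
Proof.
move=> C_uniq CP x xC Px y yC.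
have [i q rotC] := rot_to xC.
have xq_uniq : uniq (x :: q) by rewrite -rotC rot_uniq.
have : all [pred z | (z \in C) && P z] (rcons q x).
  apply: fpath_all (cycle_next xq_uniq) _; last by rewrite /= xC Px.
  move=> z /andP[zC Pz]; rewrite -rotC (next_rot i C_uniq) /= mem_next zC.
  exact: CP.
by move/allP/(_ y); rewrite mem_rcons -rotC mem_rot yC => /(_ isT)/andP[].
Qed.

Lemma uniq_next_neq (T : eqType) (C : seq T) x :
  uniq C -> (1 < size C)%N -> x \in C -> next C x != x.
Proof.
move=> C_uniq C_gt1 xC; apply: contraTneq C_gt1 => nextx; rewrite -leqNgt.
have eqx : {in C, forall y, y == x}.
  by apply: (cycle_next_invariant C_uniq) xC _ => [y _ /eqP->|]; rewrite ?nextx.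
by rewrite -(count_predT C) -(eq_in_count eqx) count_uniq_mem ?leq_b1.
Qed.

Section ExtendPerm.

Variables (n : nat) (T : {set 'I_n}).

(* [index x (enum T)] is the rank of [x] in [T], out of range iff [x \notin T]. *)
Definition extend_perm_fun (p : 'S_#|T|) (x : 'I_n) : 'I_n :=
  if (insub (index x (enum T)) : option 'I_#|T|) is Some i
  then enum_val (p i) else x.

Lemma insub_index_enum_val (j : 'I_#|T|) :
  (insub (index (enum_val j) (enum T)) : option 'I_#|T|) = Some j.
Proof.
have -> : index (enum_val j) (enum T) = j.
  by rewrite (enum_val_nth (enum_val j)) index_uniq ?enum_uniq // -cardE.
exact: valK.
Qed.

Lemma extend_perm_fun_enum_val p j : extend_perm_fun p (enum_val j) = enum_val (p j).
Proof. by rewrite /extend_perm_fun insub_index_enum_val. Qed.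

Lemma extend_perm_fun_out p x : x \notin T -> extend_perm_fun p x = x.
Proof.
move=> xT; rewrite /extend_perm_fun insubF //.
by rewrite memNindex ?mem_enum // -cardE ltnn.
Qed.

Lemma mem_enum_valP x : x \in T -> exists j : 'I_#|T|, x = enum_val j.
Proof. by move=> xT; exists (enum_rank_in xT x); rewrite enum_rankK_in. Qed.

Lemma extend_perm_fun_inj p : injective (extend_perm_fun p).
Proof.
move=> x y.
have [/mem_enum_valP[i ->]|xT] := boolP (x \in T);
  have [/mem_enum_valP[j ->]|yT] := boolP (y \in T).
- by rewrite !extend_perm_fun_enum_val => /enum_val_inj/perm_inj->.
- by rewrite extend_perm_fun_enum_val extend_perm_fun_out // => eq_y;
    rewrite -eq_y enum_valP in yT.
- by rewrite extend_perm_fun_enum_val extend_perm_fun_out // => eq_x;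
    rewrite eq_x enum_valP in xT.
- by rewrite !extend_perm_fun_out.
Qed.

Definition extend_perm (p : 'S_#|T|) : 'S_n := perm (@extend_perm_fun_inj p).

Lemma extend_perm_inj : injective extend_perm.
Proof.
move=> p q /permP eq_pq; apply/permP => j; apply: enum_val_inj.
by have := eq_pq (enum_val j); rewrite !permE !extend_perm_fun_enum_val.
Qed.

Definition fixes_outside (s : 'S_n) := [forall x in ~: T, s x == x].

Lemma fixes_outsideP (s : 'S_n) :
  reflect (exists p, s = extend_perm p) (fixes_outside s).
Proof.
apply: (iffP forall_inP) => [s_fix | [p ->] x]; last first.
  by rewrite inE => xT; rewrite permE extend_perm_fun_out.
have sT (j : 'I_#|T|) : s (enum_val j) \in T.
  apply: contraT => sjT.
  have /eqP/perm_inj sj : s (s (enum_val j)) == s (enum_val j) by rewrite s_fix ?inE.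
  by rewrite sj enum_valP in sjT.
pose p (j : 'I_#|T|) := enum_rank_in (sT j) (s (enum_val j)).
have pE j : enum_val (p j) = s (enum_val j) by rewrite enum_rankK_in.
have p_inj : injective p.
  by move=> i j /(congr1 enum_val); rewrite !pE => /perm_inj/enum_val_inj.
exists (perm p_inj); apply/permP => x; rewrite permE.
have [/mem_enum_valP[j ->]|xT] := boolP (x \in T).
  by rewrite extend_perm_fun_enum_val permE pE.
by rewrite extend_perm_fun_out // (eqP (s_fix x _)) ?inE.
Qed.

End ExtendPerm.

Definition principal_submx (R : Type) n (M : 'M[R]_n) (T : {set 'I_n}) :
  'M[R]_#|T| := mxsub enum_val enum_val M.

Lemma sum_fixes_outside (R : comPzRingType) n (M : 'M[R]_n) (T : {set 'I_n}) :
    {in ~: T, forall i, M i i = 1} ->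
  \sum_(s | fixes_outside T s) \prod_(i < n) M i (s i) =
    per (principal_submx M T).
Proof.
move=> M1.
rewrite (eq_bigl (mem [set extend_perm p | p : 'S_#|T|])); last first.
  by move=> s; apply/fixes_outsideP/imsetP => -[p]; exists p.
rewrite big_imset /=; last by move=> p q _ _; apply: extend_perm_inj.
apply: eq_bigr => p _.
rewrite (bigID (mem T)) /= [X in _ * X]big1 ?mulr1 => [|i iT]; last first.
  by rewrite permE extend_perm_fun_out // M1 ?inE.
by rewrite big_enum_val; apply: eq_bigr => j _; rewrite permE extend_perm_fun_enum_val mxE.
Qed.

Section CycleRows.

Variables (R : comPzRingType) (n : nat) (M : 'M[R]_n) (C : seq 'I_n).
Hypotheses (C_uniq : uniq C) (C_gt1 : (1 < size C)%N).
Hypothesis M_diag : {in C, forall c, M c c = 1}.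
Hypothesis M_supp : {in C, forall c j, M c j != 0 -> (j == c) || (j == next C c)}.

Let off_C := [set x : 'I_n | x \notin C].
Let term (s : 'S_n) := \prod_(i < n) M i (s i).

Definition follows_cycle (s : 'S_n) := [forall c in C, s c == next C c].

Lemma fixes_off_cycleE (s : 'S_n) :
  fixes_outside off_C s = [forall c in C, s c == c].
Proof. by apply: eq_forallb => x; rewrite !inE negbK. Qed.

Lemma term_neq0_fixes_or_follows (s : 'S_n) :
  term s != 0 -> fixes_outside off_C s || follows_cycle s.
Proof.
move=> s_nz; rewrite fixes_off_cycleE.
have [//|/forall_inPn[d dC sdNd]] /= := boolP [forall c in C, s c == c].
have s_supp i : M i (s i) != 0.
  by apply: contraNneq s_nz => Mi0; rewrite /term (bigD1 i) //= Mi0 mul0r.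
apply/forall_inP; apply: (cycle_next_invariant C_uniq _ dC) => [z zC /eqP sz|].
  have nzC : next C z \in C by rewrite mem_next.
  case/orP: (M_supp nzC (s_supp _)) => // /eqP snz.
  have /eqP : next C z = z by apply: (@perm_inj _ s); rewrite snz sz.
  by rewrite (negbTE (uniq_next_neq C_uniq C_gt1 zC)).
by case/orP: (M_supp dC (s_supp d)); rewrite ?(negbTE sdNd).
Qed.

Lemma follows_cycle_not_fixes (s : 'S_n) :
  follows_cycle s -> ~~ fixes_outside off_C s.
Proof.
have [c cC] : exists c, c \in C by case: (C) C_gt1 => // c q _; exists c; rewrite mem_head.
move=> /forall_inP/(_ c cC)/eqP s_c; rewrite fixes_off_cycleE.
by apply: contraTN (uniq_next_neq C_uniq C_gt1 cC) => /forall_inP/(_ c cC); rewrite s_c negbK.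
Qed.

Lemma sum_not_fixes_off_cycle :
  \sum_(s | ~~ fixes_outside off_C s) term s = \sum_(s | follows_cycle s) term s.
Proof.
rewrite (bigID follows_cycle) /= [X in _ + X]big1 ?addr0 => [|s /andP[]]; last first.
  by move=> s_fix; apply: contraNeq => /term_neq0_fixes_or_follows; rewrite (negbTE s_fix).
apply: eq_bigl => s.
by have [/follows_cycle_not_fixes->|_] := boolP (follows_cycle s); rewrite ?andbF.
Qed.

Lemma sum_follows_cycle :
  \sum_(s | follows_cycle s) term s =
    \prod_(c <- C) M c (next C c) * \sum_(s | fixes_outside off_C s) term s.
Proof.
pose rho : 'S_n := perm (can_inj (prev_next C_uniq)).
have follows_rho t : follows_cycle (t * rho) = [forall c in C, t c == c].
  by apply: eq_forallb => x; rewrite permM permE (can_eq (prev_next C_uniq)).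
rewrite (reindex_inj (mulIg rho)) big_distrr /=.
apply: eq_big => t; first by rewrite fixes_off_cycleE follows_rho.
rewrite follows_rho => /forall_inP t_fix.
have tNC i : i \notin C -> t i \notin C.
  by apply: contra => tiC; rewrite -(perm_inj (eqP (t_fix _ tiC))).
rewrite /term (bigID (mem C)) [X in _ * X](bigID (mem C)) /=.
rewrite [X in _ * (X * _)]big1 ?mul1r => [|i iC]; last by rewrite (eqP (t_fix i iC)) M_diag.
rewrite big_uniq //; congr (_ * _); apply: eq_bigr => i iC; rewrite permM permE.
  by rewrite (eqP (t_fix i iC)).
by rewrite next_nth (negbTE (tNC i iC)).
Qed.

Theorem per_cycle_rows :
  per M = per (principal_submx M off_C) * (1 + \prod_(c <- C) M c (next C c)).
Proof.
rewrite -sum_fixes_outside => [|i]; last by rewrite !inE negbK; apply: M_diag.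
rewrite /per (bigID (fixes_outside off_C)) /= sum_not_fixes_off_cycle sum_follows_cycle.
by rewrite mulrDr mulr1 mulrC.
Qed.

End CycleRows.

Theorem mainTheorem6 (R : realFieldType) (n : nat) (A : 'M[R]_n)
    (C : seq 'I_n) :
  omega01 A ->
  C != [::] -> uniq C -> path.cycle (GA_edge A) C ->
  per (1%:M - A) =
    per (1%:M - del_principal A C) *
      (1 + (-1) ^+ size C * \prod_(i <- C) A i (next C i)).
Proof.
move=> [[A_ge0 _] A_diag A_supp1] C_nil C_uniq C_cycle.
have A_next c : c \in C -> A c (next C c) != 0 := next_cycle C_cycle.
have next_neq c : c \in C -> next C c != c.
  by move=> cC; apply: contraNneq (A_next c cC) => ->; rewrite A_diag.
have C_gt1 : (1 < size C)%N.
  case: (C) C_nil next_neq => [|c [|c' q]] // _ /(_ c).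
  by rewrite mem_head /= eqxx => /(_ isT); rewrite eqxx.
have A_supp c j : c \in C -> A c j != 0 -> j = next C c.
  move=> cC Acj; have pos k : A c k != 0 -> k \in [pred k | 0 < A c k].
    by move=> Ack; rewrite inE lt_def Ack A_ge0.
  by move/card_le1_eqP: (A_supp1 c); apply; apply: pos => //; apply: A_next.
have M_diag : {in C, forall c, (1%:M - A) c c = 1}.
  by move=> c _; rewrite !mxE eqxx A_diag subr0.
have M_supp : {in C, forall c j, (1%:M - A) c j != 0 -> (j == c) || (j == next C c)}.
  move=> c cC j; rewrite !mxE; have [//|_] := eqVneq c j.
  by rewrite sub0r oppr_eq0 => /(A_supp _ _ cC)->; rewrite eqxx orbT.
rewrite (per_cycle_rows C_uniq C_gt1 M_diag M_supp).
congr (per _ * (1 + _)).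
  by apply/matrixP => i j; rewrite !mxE (inj_eq enum_val_inj).
rewrite (eq_big_seq (fun c => - A c (next C c))) => [|c cC]; last first.
  by rewrite !mxE eq_sym (negbTE (next_neq c cC)) sub0r.
by rewrite !big_uniq // prodrN (card_uniqP C_uniq).
Qed.
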